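(* Let $\beta\in(3/2,\beta^*]$. Then $\mathbb P(D)=1$.
   Context: $\beta^*\approx1.5437$ is the real root of $x^3-2x^2+2x=2$. $\vec q_0=(0,0)$, $\vec q_1=(1,0)$, $\vec q_2=(0,1)$, $f_i(\vec z)=(\vec z+\vec q_i)/\beta$. $H=\{(x,y):x<\frac1\beta,\ y<\frac1\beta,\ x+y>\frac{1}{\beta(\beta-1)}\}$; $\tilde C_{01}=\{x\ge\frac1\beta,\ y\ge0,\ x+y\le\frac{1}{\beta(\beta-1)}\}$; $\tilde C_{12}=\{x\ge\frac1\beta,\ y\ge\frac1\beta,\ x+y\le\frac1{\beta-1}\}$; $\tilde C_{02}=\{x\ge0,\ y\ge\frac1\beta,\ x+y\le\frac{1}{\beta(\beta-1)}\}$; for $ij\in\{01,12,02\}$, $C_{ij}=\tilde C_{ij}\setminus\bigl(\bigcup_{n\ge1}f_if_j^n(H)\cup\bigcup_{n\ge1}f_jf_i^n(H)\bigr)$, and $C=C_{01}\cup C_{12}\cup C_{02}$. $\Upsilon=\{0,1,2\}^{\mathbb N}$ with product $\sigma$-algebra and uniform product measure $\mathbb P$. $D$ is the set of $(b_1,b_2,\ldots)\in\Upsilon$ such that $\sum_{i\ge1}\vec q_{b_{j+i-1}}\beta^{-i}\in C$ for infinitely many $j$. *)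

From HB Require Import structures.
From mathcomp Require Import all_boot all_order all_algebra.
From mathcomp Require Import all_classical all_reals all_analysis.
Set Implicit Arguments. Unset Strict Implicit. Unset Printing Implicit Defensive.
Import Order.TTheory GRing.Theory Num.Theory numFieldNormedType.Exports.
Local Open Scope classical_set_scope.
Local Open Scope ring_scope.

(* Sequences are indexed from 0: (b 0, b 1, ...) stands for (b_1, b_2, ...). *)

Definition seq3 : Type := nat -> 'I_3.
HB.instance Definition _ := gen_eqMixin seq3.
HB.instance Definition _ := gen_choiceMixin seq3.
HB.instance Definition _ := isPointed.Build seq3 (fun _ => ord0).

Definition cyl (w : seq 'I_3) : set seq3 :=
  [set b | forall i, (i < size w)%N -> b i = nth ord0 w i].

Definition cylinders : set (set seq3) := [set A | exists w, A = cyl w].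

(* {0,1,2}^N with the product sigma-algebra (generated by the cylinders) *)
Notation Upsilon := (g_sigma_algebraType cylinders).

Section Geometry.
Variable R : realType.
Variable beta : R.

(* q_0 = (0,0), q_1 = (1,0), q_2 = (0,1) *)
Definition qv (k : nat) : R * R := ((k == 1%N)%:R, (k == 2%N)%:R).

Definition fmap (k : nat) (z : R * R) : R * R :=
  ((z.1 + (qv k).1) / beta, (z.2 + (qv k).2) / beta).

Definition Hset : set (R * R) :=
  [set z | z.1 < beta^-1 /\ z.2 < beta^-1 /\ (beta * (beta - 1))^-1 < z.1 + z.2].

Definition Ct01 : set (R * R) :=
  [set z | beta^-1 <= z.1 /\ 0 <= z.2 /\ z.1 + z.2 <= (beta * (beta - 1))^-1].
Definition Ct12 : set (R * R) :=
  [set z | beta^-1 <= z.1 /\ beta^-1 <= z.2 /\ z.1 + z.2 <= (beta - 1)^-1].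
Definition Ct02 : set (R * R) :=
  [set z | 0 <= z.1 /\ beta^-1 <= z.2 /\ z.1 + z.2 <= (beta * (beta - 1))^-1].

Definition fimg (i j n : nat) : set (R * R) :=
  [set fmap i (iter n (fmap j) w) | w in Hset].

Definition Cij (Ct : set (R * R)) (i j : nat) : set (R * R) :=
  Ct `\` [set z | exists n, (1 <= n)%N /\ (fimg i j n z \/ fimg j i n z)].

Definition Cset : set (R * R) :=
  Cij Ct01 0 1 `|` Cij Ct12 1 2 `|` Cij Ct02 0 2.

(* sum_{i>=1} q_{b_{j+i-1}} beta^{-i}, with 0-based sequences:
   sum_{i>=0} q_{b (j+i)} beta^{-(i+1)} *)
Definition zpt (b : nat -> 'I_3) (j : nat) : R * R :=
  (limn (series (fun i => (qv (b (j + i)%N)).1 / beta ^+ i.+1)),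
   limn (series (fun i => (qv (b (j + i)%N)).2 / beta ^+ i.+1))).

Definition Dset : set Upsilon :=
  [set b | forall N : nat, exists j : nat, (N <= j)%N /\ Cset (zpt b j)].

End Geometry.

(* For 3/2 < beta <= beta* the number beta lies between the plastic number
   and the golden ratio: beta + 1 <= beta^3 and beta^2 <= beta + 1.  Under
   these two inequalities f_0 f_1 f_1 f_1 f_0 maps the triangle
   x, y >= 0, x + y <= 1/(beta - 1), which contains every point z_j(b), into
   C_01 while missing all the holes f_0 f_1^n(H) and f_1 f_0^n(H): along the
   inverse branches either the first coordinate stays >= 1/beta or the
   coordinate sum stays <= 1/(beta (beta - 1)).  So z_j(b) is in C whenever
   the block 0 1 1 1 0 starts at position j of b.  Under the uniform measure,
   avoiding this block in K disjoint windows has probability (1 - 3^-5)^K,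
   hence almost surely the block starts at infinitely many positions. *)

From Pilot Require Import Defs.
From HB Require Import structures.
From mathcomp Require Import all_boot all_order all_algebra.
From mathcomp Require Import all_classical all_reals all_analysis.
From mathcomp Require Import ring lra measurable_realfun.
Import Order.TTheory GRing.Theory Num.Theory numFieldNormedType.Exports.
Local Open Scope classical_set_scope.
Local Open Scope ring_scope.
Set Implicit Arguments. Unset Strict Implicit. Unset Printing Implicit Defensive.

Definition prefix_set (L : nat) (p : pred (seq 'I_3)) : set seq3 :=
  [set b | p (mkseq b L)].

Definition occurs_at (L : nat) (w : seq 'I_3) : set seq3 :=
  [set b | mkseq (fun i => b (L + i)%N) (size w) = w].

Definition words (L : nat) : seq (seq 'I_3) := [seq val t | t : L.-tuple 'I_3].

Lemma mem_words L u : (u \in words L) = (size u == L).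
Proof.
apply/mapP/eqP => [[t _ ->]|su]; first exact: size_tuple.
by exists (Tuple (introT eqP su)); rewrite ?mem_enum.
Qed.

Lemma uniq_words L : uniq (words L).
Proof. by rewrite map_inj_uniq ?enum_uniq //; exact: val_inj. Qed.

Lemma cylP u b : cyl u b <-> mkseq b (size u) = u.
Proof.
split=> [ub|<- i]; last by rewrite size_mkseq => iu; rewrite nth_mkseq.
apply: (@eq_from_nth _ ord0); rewrite ?size_mkseq // => i iu.
by rewrite nth_mkseq // ub.
Qed.

Lemma mkseqD T (f : nat -> T) m n :
  mkseq f (m + n) = mkseq f m ++ mkseq (fun i => f (m + i)%N) n.
Proof.
rewrite /mkseq iotaD map_cat add0n; congr (_ ++ _).
by rewrite -[in LHS](addn0 m) iotaDl -map_comp.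
Qed.

Lemma bigsetU_seqP (T : Type) (I : choiceType) (s : seq I) (P : pred I) (F : I -> set T) x :
  (\big[setU/set0]_(i <- s | P i) F i) x <-> exists2 i, (i \in s) && P i & F i x.
Proof. by rewrite -(bigcup_seq_cond s F P); split=> [[i]|[i]]; exists i. Qed.

Lemma prefix_setE L p :
  prefix_set L p = \big[setU/set0]_(u <- words L | p u) cyl u.
Proof.
apply/seteqP; split=> b.
  move=> pb; apply/bigsetU_seqP; exists (mkseq b L).
    by rewrite mem_words size_mkseq eqxx.
  by apply/cylP; rewrite size_mkseq.
case/bigsetU_seqP => u /andP [+ pu] /cylP; rewrite mem_words => /eqP <- bu.
by rewrite /prefix_set /= bu.
Qed.

Lemma prefix_occurs_atE L p w : prefix_set L p `&` occurs_at L w =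
  \big[setU/set0]_(u <- words L | p u) cyl (u ++ w).
Proof.
apply/seteqP; split=> b.
  move=> [pb bw]; apply/bigsetU_seqP; exists (mkseq b L).
    by rewrite mem_words size_mkseq eqxx.
  by apply/cylP; rewrite size_cat size_mkseq mkseqD bw.
case/bigsetU_seqP => u /andP [+ pu] /cylP; rewrite mem_words size_cat => /eqP <-.
rewrite mkseqD => /eqP; rewrite eqseq_cat ?size_mkseq // => /andP [/eqP bu /eqP bw].
by split; rewrite /prefix_set /occurs_at /= ?bu.
Qed.

Lemma prefix_setD_occurs_at L p w : prefix_set L p `\` occurs_at L w =
  prefix_set (L + size w) (fun u => p (take L u) && (drop L u != w)).
Proof.
apply/seteqP; split=> b; rewrite /prefix_set /occurs_at /= mkseqD.
  by rewrite take_size_cat ?drop_size_cat ?size_mkseq // => -[-> /eqP ->].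
by rewrite take_size_cat ?drop_size_cat ?size_mkseq // => /andP [-> /eqP].
Qed.

Lemma measurable_cyl u : measurable (cyl u : set Upsilon).
Proof. by apply: sub_sigma_algebra; exists u. Qed.

Lemma measurable_prefix_set L p : measurable (prefix_set L p : set Upsilon).
Proof.
by rewrite prefix_setE; apply: bigsetU_measurable => u _; exact: measurable_cyl.
Qed.

Lemma measurable_occurs_at L w : measurable (occurs_at L w : set Upsilon).
Proof.
have -> : occurs_at L w = prefix_set L predT `&` occurs_at L w.
  by apply/seteqP; split=> b // [].
by rewrite prefix_occurs_atE; apply: bigsetU_measurable => u _; exact: measurable_cyl.
Qed.

(* The windows [N + k * size w, N + (k + 1) * size w) are disjoint, which
   makes the K avoidance events independent. *)
Fixpoint avoid_spaced (N : nat) (w : seq 'I_3) (K : nat) : set seq3 :=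
  if K is K'.+1 then avoid_spaced N w K' `\` occurs_at (N + K' * size w) w
  else setT.

Lemma avoid_spaced_prefix N w K :
  exists p, avoid_spaced N w K = prefix_set (N + K * size w) p.
Proof.
elim: K => [|K [p IH]] /=; first by exists predT; apply/seteqP; split.
by rewrite IH prefix_setD_occurs_at mulSnr addnA; eexists.
Qed.

Definition avoid_from (N : nat) (w : seq 'I_3) : set seq3 :=
  \bigcap_(j in [set j | (N <= j)%N]) ~` occurs_at j w.

Lemma avoid_from_spaced N w K : avoid_from N w `<=` avoid_spaced N w K.
Proof.
move=> b bN; elim: K => [|K IH] //=; split=> //.
by apply: bN; rewrite /= leq_addr.
Qed.

Lemma measurable_avoid_from N w : measurable (avoid_from N w : set Upsilon).
Proof.
apply: bigcap_measurable; first by exists N => /=.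
by move=> j _; apply: measurableC; exact: measurable_occurs_at.
Qed.

Lemma ge0_le_expr_eq0 (R : realType) (q : R) (x : \bar R) : 0 <= q < 1 ->
  (0 <= x)%E -> (forall K, x <= (q ^+ K)%:E)%E -> x = 0%E.
Proof.
move=> /andP [q0 q1]; case: x => [r||] //= r0 rq; last by have := rq 0%N.
congr EFin; apply: le_anti; rewrite (_ : 0 <= r) ?andbT; last by rewrite -lee_fin.
have q_cvg : q ^+ K @[K --> \oo] --> (0 : R) by apply: cvg_expr; rewrite ger0_norm.
rewrite -(cvg_lim _ q_cvg) //; apply: limr_ge; first by apply/cvg_ex; exists 0.
by near=> K; rewrite -lee_fin.
Unshelve. all: end_near.
Qed.

Section UniformMeasure.
Variables (R : realType) (P : probability Upsilon R).
Hypothesis P_cyl : forall w : seq 'I_3, P (cyl w) = ((3%:R ^- size w : R))%:E.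

Lemma measure_bigsetU_cyl (s : seq (seq 'I_3)) (F : seq 'I_3 -> seq 'I_3) n :
  uniq s -> {in s &, injective F} -> {in s, forall u, size (F u) = n} ->
  P (\big[setU/set0]_(u <- s) cyl (F u)) = ((size s)%:R * 3%:R ^- n : R)%:E.
Proof.
elim: s => [|u s IH] /=; first by rewrite big_nil measure0 mul0r.
move=> /andP [us suniq] Finj Fsize.
have sub_s : {subset s <= u :: s} by move=> v vs; rewrite inE vs orbT.
have Finj' := sub_in2 sub_s Finj; have Fsize' := sub_in1 sub_s Fsize.
rewrite big_cons measureU.
- rewrite -natr1 mulrDl mul1r addrC EFinD; congr (_ + _)%E.
    exact: IH suniq Finj' Fsize'.
  by have := P_cyl (F u); rewrite Fsize ?mem_head.
- exact: measurable_cyl.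
- by apply: bigsetU_measurable => v _; exact: measurable_cyl.
apply/seteqP; split => // b [/cylP bu /bigsetU_seqP [v /andP [vs _] /cylP bv]].
have eF : F u = F v by rewrite -bu -bv Fsize ?mem_head // Fsize'.
by move: us; rewrite (Finj u v) ?mem_head ?inE ?vs ?orbT.
Qed.

Lemma measure_prefix_set L p :
  P (prefix_set L p) = ((count p (words L))%:R * 3%:R ^- L : R)%:E.
Proof.
rewrite prefix_setE -big_filter (@measure_bigsetU_cyl _ id L) ?size_filter //.
- exact/filter_uniq/uniq_words.
by move=> u; rewrite mem_filter mem_words => /andP [_ /eqP].
Qed.

Lemma measure_prefix_occurs_at L p w : P (prefix_set L p `&` occurs_at L w) =
  ((count p (words L))%:R * 3%:R ^- (L + size w) : R)%:E.
Proof.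
rewrite prefix_occurs_atE -big_filter.
rewrite (@measure_bigsetU_cyl _ (cat^~ w) (L + size w)) ?size_filter //.
- exact/filter_uniq/uniq_words.
- move=> u v; rewrite !mem_filter !mem_words => /andP [_ /eqP su] /andP [_ /eqP sv] /eqP.
  by rewrite eqseq_cat ?su ?sv // => /andP [/eqP].
by move=> u; rewrite mem_filter mem_words size_cat => /andP [_ /eqP ->].
Qed.

Lemma measure_prefix_setD_occurs_at L p w : P (prefix_set L p `\` occurs_at L w) =
  (P (prefix_set L p) * (1 - 3%:R ^- size w : R)%:E)%E.
Proof.
set A := prefix_set L p; set B := occurs_at L w.
have PA : (P A < +oo)%E by rewrite measure_prefix_set ltry.
have h : P (A `\` B) = (P A - P (A `&` B))%E :=
  measureD (measurable_prefix_set L p) (measurable_occurs_at L w) PA.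
rewrite h measure_prefix_set measure_prefix_occurs_at -EFinB -EFinM.
by congr EFin; rewrite exprD invfM; ring.
Qed.

Lemma measure_avoid_spaced N w K :
  P (avoid_spaced N w K) = ((1 - 3%:R ^- size w) ^+ K : R)%:E.
Proof.
elim: K => [|K IH] /=; first exact: probability_setT.
have [p e] := avoid_spaced_prefix N w K.
by rewrite e measure_prefix_setD_occurs_at -e IH -EFinM exprSr.
Qed.

Lemma measure_avoid_from N w : P (avoid_from N w) = 0%E.
Proof.
have pow_gt0 : 0 < 3%:R ^+ size w :> R by apply: exprn_gt0.
have q01 : 0 <= 1 - (3%:R ^- size w : R) < 1.
  have : 0 < 3%:R ^- size w :> R by rewrite invr_gt0.
  have : 3%:R ^- size w <= 1 :> R by rewrite invf_le1 //; apply: exprn_ege1; rewrite ler1n.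
  lra.
apply: (ge0_le_expr_eq0 q01 (measure_ge0 P _)) => K.
rewrite -(measure_avoid_spaced N w K) le_measure ?inE //.
- exact: measurable_avoid_from.
- by have [p ->] := avoid_spaced_prefix N w K; exact: measurable_prefix_set.
- exact: avoid_from_spaced.
Qed.

End UniformMeasure.

Lemma qv_bounds (R : realType) k :
  [/\ 0 <= (qv R k).1 <= 1, 0 <= (qv R k).2 <= 1 & (qv R k).1 + (qv R k).2 <= 1].
Proof. by rewrite /qv; case: k => [|[|[|k]]] /=; rewrite ?addr0 ?add0r ?ler01 ?lexx. Qed.

Section Geometry.
Variables (R : realType) (beta : R).
Hypothesis beta_gt1 : 1 < beta.

Let beta_gt0 : 0 < beta. Proof. exact: lt_trans beta_gt1. Qed.
Let beta_neq0 : beta != 0. Proof. exact: lt0r_neq0. Qed.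

Local Notation f := (Defs.fmap beta).

Definition finv (k : nat) (z : R * R) : R * R :=
  (beta * z.1 - (qv R k).1, beta * z.2 - (qv R k).2).

Lemma fmapK k : cancel (f k) (finv k).
Proof. by case=> x y; rewrite /Defs.fmap /finv /=; congr pair; field. Qed.

Lemma finvK k : cancel (finv k) (f k).
Proof. by case=> x y; rewrite /Defs.fmap /finv /=; congr pair; field. Qed.

Lemma iter_finv_fmap k n u : iter n.+1 (finv k) (f k u) = iter n (finv k) u.
Proof. by rewrite iterSr fmapK. Qed.

Lemma fimgE i j n z : fimg beta i j n z <-> Hset beta (iter n (finv j) (finv i z)).
Proof.
have iterK (f g : R * R -> R * R) m : cancel f g -> cancel (iter m f) (iter m g).
  by move=> fK; elim: m => [|m IH] w //; rewrite [iter m.+1 f w]iterS iterSr fK.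
split=> [[w Hw <-]|Hz]; first by rewrite fmapK iterK // => w'; exact: fmapK.
by exists (iter n (finv j) (finv i z)) => //; rewrite iterK ?finvK // => w'; exact: finvK.
Qed.

Definition triangle : set (R * R) :=
  [set z | 0 <= z.1 /\ 0 <= z.2 /\ z.1 + z.2 <= (beta - 1)^-1].

Lemma fmap_triangle k u : triangle u -> triangle (f k u).
Proof.
rewrite /triangle /Defs.fmap; have [] := qv_bounds R k.
move: (qv R k) => q /andP [q1 _] /andP [q2 _] q12 /= [u1 [u2 u12]].
have b0 := ltW beta_gt0.
split; [exact: divr_ge0 (addr_ge0 u1 q1) b0|split; first exact: divr_ge0 (addr_ge0 u2 q2) b0].
rewrite -mulrDl ler_pdivrMr // [X in _ <= X]mulrC.
have -> : beta * (beta - 1)^-1 = (beta - 1)^-1 + 1 by field; rewrite subr_eq0 gt_eqF.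
lra.
Qed.

Lemma not_Hset_x_ge u : beta^-1 <= u.1 -> ~ Hset beta u.
Proof. by move=> ? [? _]; lra. Qed.

Lemma not_Hset_sum_le u : u.1 + u.2 <= (beta * (beta - 1))^-1 -> ~ Hset beta u.
Proof. by move=> ? [_ [_ ?]]; lra. Qed.

Lemma fmap1_x_ge u : 0 <= u.1 -> beta^-1 <= (f 1 u).1.
Proof.
have s0 : 0 < beta^-1 by rewrite invr_gt0.
by move=> u0; rewrite /Defs.fmap /qv /= mulrDl mul1r lerDr; exact: mulr_ge0 u0 (ltW s0).
Qed.

Lemma iter_finv1_sum_le n u : u.1 + u.2 <= (beta * (beta - 1))^-1 ->
  (iter n (finv 1) u).1 + (iter n (finv 1) u).2 <= (beta * (beta - 1))^-1.
Proof.
have c1 : (beta * (beta - 1))^-1 * (beta - 1) <= 1.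
  by rewrite invfM -mulrA mulVf ?subr_eq0 ?gt_eqF // mulr1 invf_le1 // ltW.
elim: n => // n IH /IH; rewrite iterS /finv /qv /=.
set a := iter n _ u => /(ler_wpM2l (ltW beta_gt0)); lra.
Qed.

Lemma iter_finv0_x_ge n u : beta^-1 <= u.1 -> beta^-1 <= (iter n (finv 0) u).1.
Proof.
have s0 : 0 < beta^-1 by rewrite invr_gt0.
elim: n => // n IH /IH; rewrite iterS /finv /qv /=.
set a := iter n _ u => ha; have a0 := le_trans (ltW s0) ha.
by rewrite subr0 (le_trans ha) // ler_peMl // ltW.
Qed.

Lemma fmap0_Ct01 v : triangle v -> 1 <= v.1 -> Ct01 beta (f 0 v).
Proof.
case: v => a b [/= a0 [b0 ab]] a1; rewrite /Ct01 /Defs.fmap /qv /= !addr0.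
have s0 : 0 < beta^-1 by rewrite invr_gt0.
split; first by rewrite -[X in X <= _]mul1r ler_pM2r.
split; first exact: divr_ge0 b0 (ltW beta_gt0).
by rewrite -mulrDl mulrC invfM ler_pM2l.
Qed.

Lemma notin_fimg01_fmap01110 z n : triangle z -> (1 <= n)%N ->
  ~ fimg beta 0 1 n (f 0 (f 1 (f 1 (f 1 (f 0 z))))).
Proof.
move=> Tz n1 /fimgE; rewrite fmapK.
case: n n1 => [//|[|[|m]]] _; rewrite ?iter_finv_fmap /=.
- apply: not_Hset_x_ge; apply: fmap1_x_ge.
  by have [] := fmap_triangle 1 (fmap_triangle 0 Tz).
- apply: not_Hset_x_ge; apply: fmap1_x_ge.
  by have [] := fmap_triangle 0 Tz.
apply: not_Hset_sum_le; apply: iter_finv1_sum_le.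
case: z Tz => x y [/= _ [_ xy]]; rewrite /Defs.fmap /qv /= !addr0.
by rewrite -mulrDl mulrC invfM ler_pM2l ?invr_gt0.
Qed.

Lemma notin_fimg10_fmap0 v n : (1 <= n)%N ->
  beta^-1 <= beta ^+ 2 * (v.1 - 1) ->
  beta * (v.1 + v.2 - 1) <= (beta * (beta - 1))^-1 ->
  ~ fimg beta 1 0 n (f 0 v).
Proof.
case: v => a b n1 /= hx hsum /fimgE.
have -> : finv 1 (f 0 (a, b)) = (a - 1, b).
  by rewrite /finv /Defs.fmap /qv /=; congr pair; field.
case: n n1 => [//|[|m]] _.
  by apply: not_Hset_sum_le; rewrite /finv /qv /= !subr0 -mulrDr addrAC.
rewrite !iterSr; apply: not_Hset_x_ge; apply: iter_finv0_x_ge.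
by rewrite /finv /qv /= !subr0 mulrA -expr2.
Qed.

Hypothesis beta_golden : beta ^+ 2 <= beta + 1.
Hypothesis beta_plastic : beta + 1 <= beta ^+ 3.

Lemma golden_fmap1110 z : triangle z ->
  beta^-1 <= beta ^+ 2 * ((f 1 (f 1 (f 1 (f 0 z)))).1 - 1).
Proof.
case: z => x y [/= x0 _].
have -> : beta ^+ 2 * ((f 1 (f 1 (f 1 (f 0 (x, y))))).1 - 1) =
    beta^-1 + (beta + 1 - beta ^+ 2) + beta ^- 2 * x.
  by rewrite /Defs.fmap /qv /=; field.
have : 0 <= beta ^- 2 * x by rewrite mulr_ge0 // invr_ge0 exprn_ge0 // ltW.
have := beta_golden; lra.
Qed.

Lemma plastic_fmap1110 z : triangle z ->
  beta * ((f 1 (f 1 (f 1 (f 0 z)))).1 + (f 1 (f 1 (f 1 (f 0 z)))).2 - 1)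
    <= (beta * (beta - 1))^-1.
Proof.
have bm1 : beta - 1 != 0 by rewrite subr_eq0 gt_eqF.
case: z => x y [/= x0 [y0 xy]].
have -> : beta * ((f 1 (f 1 (f 1 (f 0 (x, y))))).1 + (f 1 (f 1 (f 1 (f 0 (x, y))))).2 - 1) =
    1 + beta^-1 + beta ^- 2 - beta + beta ^- 3 * (x + y).
  by rewrite /Defs.fmap /qv /=; field.
(* Cleared of denominators: beta^5 - 2 beta^4 + beta^2 + beta - 1
   = (beta - 1)^2 (beta^3 - beta - 1). *)
have -> : (beta * (beta - 1))^-1 = 1 + beta^-1 + beta ^- 2 - beta + beta ^- 3 * (beta - 1)^-1
    + beta ^- 3 * ((beta - 1) * (beta ^+ 3 - beta - 1)).
  by field; rewrite beta_neq0 bm1.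
have s3 : 0 <= beta ^- 3 by rewrite invr_ge0 exprn_ge0 // ltW.
have : beta ^- 3 * (x + y) <= beta ^- 3 * (beta - 1)^-1 by rewrite ler_wpM2l.
have : 0 <= beta ^- 3 * ((beta - 1) * (beta ^+ 3 - beta - 1)).
  by rewrite mulr_ge0 // mulr_ge0 //; [rewrite subr_ge0 ltW|have := beta_plastic; lra].
lra.
Qed.

Lemma C01_fmap01110 z : triangle z ->
  Cij beta (Ct01 beta) 0 1 (f 0 (f 1 (f 1 (f 1 (f 0 z))))).
Proof.
move=> Tz; have hx := golden_fmap1110 Tz; have hsum := plastic_fmap1110 Tz.
split.
  apply: fmap0_Ct01; first by do 3 apply: fmap_triangle; exact: fmap_triangle.
  have : 0 < beta^-1 by rewrite invr_gt0.
  have : 0 < beta ^+ 2 by rewrite exprn_gt0.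
  move: hx; set v1 := (f 1 _).1; nra.
move=> [n [n1 []]]; first exact: notin_fimg01_fmap01110.
exact: notin_fimg10_fmap0 n1 hx hsum.
Qed.

End Geometry.

Section Expansion.
Variables (R : realType) (beta : R).
Hypothesis beta_gt1 : 1 < beta.

Let beta_gt0 : 0 < beta. Proof. exact: lt_trans beta_gt1. Qed.

Definition expansion (c : nat -> R) : R :=
  limn (series (fun i => c i / beta ^+ i.+1)).

Definition digits01 (c : nat -> R) := forall i, 0 <= c i <= 1.

Lemma expansion_term_ge0 c i : digits01 c -> 0 <= c i / beta ^+ i.+1.
Proof. by move=> /(_ i) /andP [c0 _]; rewrite divr_ge0 // exprn_ge0 // ltW. Qed.

Lemma series_expansion_ge0 c n : digits01 c ->
  0 <= series (fun i => c i / beta ^+ i.+1) n.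
Proof.
by move=> c01; rewrite /series /=; apply: sumr_ge0 => i _; exact: expansion_term_ge0.
Qed.

Lemma series_expansion_le c n : digits01 c ->
  series (fun i => c i / beta ^+ i.+1) n <= (beta - 1)^-1.
Proof.
move=> c01; have s0 : 0 < beta^-1 by rewrite invr_gt0.
have s1 : `|beta^-1| < 1 by rewrite ger0_norm ?ltW // invf_lt1.
have geo : series (geometric beta^-1 beta^-1) n <= (beta - 1)^-1.
  rewrite (_ : (beta - 1)^-1 = beta^-1 * (1 - beta^-1)^-1).
    exact: geometric_le_lim (ltW s0) s0 s1.
  by rewrite -invfM mulrBr mulr1 mulfV ?gt_eqF.
apply: le_trans geo; rewrite /series /=; apply: ler_sum => i _.
rewrite /geometric -exprS exprVn ler_pdivrMr ?exprn_gt0 // mulVf ?expf_neq0 ?gt_eqF //.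
by case/andP: (c01 i).
Qed.

Lemma is_cvg_expansion c : digits01 c -> cvgn (series (fun i => c i / beta ^+ i.+1)).
Proof.
move=> c01; apply: nondecreasing_is_cvgn.
  by apply: nondecreasing_series => i _ _; exact: expansion_term_ge0.
by exists (beta - 1)^-1 => _ [n _ <-]; exact: series_expansion_le.
Qed.

Lemma expansion_ge0 c : digits01 c -> 0 <= expansion c.
Proof.
move=> c01; apply: limr_ge; first exact: is_cvg_expansion.
by near=> n; exact: series_expansion_ge0.
Unshelve. all: end_near.
Qed.

Lemma expansion_le c : digits01 c -> expansion c <= (beta - 1)^-1.
Proof.
move=> c01; apply: limr_le; first exact: is_cvg_expansion.
by near=> n; exact: series_expansion_le.
Unshelve. all: end_near.
Qed.

Lemma expansionD c d : digits01 c -> digits01 d ->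
  expansion (fun i => c i + d i) = expansion c + expansion d.
Proof.
move=> c01 d01; rewrite /expansion; apply: cvg_lim => //.
have -> : series (fun i => (c i + d i) / beta ^+ i.+1) =
    series (fun i => c i / beta ^+ i.+1) \+ series (fun i => d i / beta ^+ i.+1).
  apply/funext => n; rewrite /series /= -big_split.
  by apply: eq_bigr => i _; rewrite mulrDl.
exact: cvgD (is_cvg_expansion c01) (is_cvg_expansion d01).
Qed.

Lemma expansionS c : digits01 c ->
  expansion c = (c 0%N + expansion (fun i => c i.+1)) / beta.
Proof.
move=> c01.
have c01S : digits01 (fun i => c i.+1) by move=> i; exact: c01.
have shift n : series (fun i => c i / beta ^+ i.+1) n.+1 =
    (c 0%N + series (fun i => c i.+1 / beta ^+ i.+1) n) / beta.
  rewrite /series /= big_nat_recl // mulrDl expr1; congr (_ + _).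
  by rewrite mulr_suml; apply: eq_bigr => i _; rewrite exprS invfM mulrA [_ / beta ^+ _ / _]mulrAC.
have : series (fun i => c i / beta ^+ i.+1) n.+1 @[n --> \oo] -->
    (c 0%N + expansion (fun i => c i.+1)) / beta.
  under eq_fun do rewrite shift.
  by apply: cvgMr_tmp; apply: cvgD; [exact: cvg_cst|exact: is_cvg_expansion].
by rewrite cvg_shiftS => /cvg_lim; apply.
Qed.

Lemma zptE (b : seq3) j : zpt beta b j =
  (expansion (fun i => (qv R (b (j + i)%N)).1), expansion (fun i => (qv R (b (j + i)%N)).2)).
Proof. by rewrite /zpt /expansion. Qed.

Lemma digits01_qv (b : seq3) j :
  digits01 (fun i => (qv R (b (j + i)%N)).1) /\ digits01 (fun i => (qv R (b (j + i)%N)).2).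
Proof. by split=> i; case: (qv_bounds R (b (j + i)%N)). Qed.

Lemma zpt_triangle b j : triangle beta (zpt beta b j).
Proof.
have [c01 d01] := digits01_qv b j.
rewrite zptE; split; [exact: expansion_ge0|split; first exact: expansion_ge0].
rewrite /= -expansionD //; apply: expansion_le => i.
by have [/andP [q1 _] /andP [q2 _] q12] := qv_bounds R (b (j + i)%N); rewrite addr_ge0.
Qed.

Lemma zpt_fmap b j : zpt beta b j = Defs.fmap beta (b j) (zpt beta b j.+1).
Proof.
have [c01 d01] := digits01_qv b j.
rewrite [zpt beta b j]zptE [zpt beta b j.+1]zptE (expansionS c01) (expansionS d01).
rewrite /Defs.fmap /= addn0.
by congr pair; rewrite addrC; congr ((expansion _ + _) / _); apply/funext => i; rewrite addSnnS.
Qed.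

End Expansion.

Section MeasurableSets.
Variables (d : measure_display) (T : measurableType d) (R : realType).
Implicit Types f g : T -> R.

Lemma measurableT_preimage d' (T' : measurableType d') (f : T -> T') (A : set T') :
  measurable_fun setT f -> measurable A -> measurable (f @^-1` A).
Proof. by move=> mf mA; rewrite -[_ @^-1` _]setTI; exact: mf. Qed.

Lemma measurable_ler_set f g : measurable_fun setT f -> measurable_fun setT g ->
  measurable [set x | f x <= g x].
Proof. by move=> mf mg; exact: measurableT_preimage (measurable_fun_ler mf mg) _. Qed.

Lemma measurable_ltr_set f g : measurable_fun setT f -> measurable_fun setT g ->
  measurable [set x | f x < g x].
Proof. by move=> mf mg; exact: measurableT_preimage (measurable_fun_ltr mf mg) _. Qed.

End MeasurableSets.

Section BorelPlane.
Variables (R : realType) (beta : R).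
Hypothesis beta_gt1 : 1 < beta.

Lemma measurable_finv k : measurable_fun setT (finv beta k).
Proof.
by apply/measurable_fun_pairP; split; apply: measurable_funB => //; apply: measurable_funM.
Qed.

Lemma measurable_coord_sum : measurable_fun setT (fun z : R * R => z.1 + z.2).
Proof. exact: measurable_funD measurable_fst measurable_snd. Qed.

Lemma measurable_Hset : measurable (Hset beta).
Proof.
apply: measurableI; [|apply: measurableI].
- exact: measurable_ltr_set measurable_fst (measurable_cst _).
- exact: measurable_ltr_set measurable_snd (measurable_cst _).
- exact: measurable_ltr_set (measurable_cst _) measurable_coord_sum.
Qed.

Lemma measurable_fimg i j n : measurable (fimg beta i j n).
Proof.
have -> : fimg beta i j n = (iter n (finv beta j) \o finv beta i) @^-1` Hset beta.
  by apply/seteqP; split=> z /fimgE; apply.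
have miter m : measurable_fun setT (iter m (finv beta j)).
  elim: m => [|m IH]; first exact: measurable_id.
  exact: measurableT_comp (measurable_finv j) IH.
exact: measurableT_preimage (measurableT_comp (miter n) (measurable_finv i)) measurable_Hset.
Qed.

Lemma measurable_Cij Ct i j : measurable Ct -> measurable (Cij beta Ct i j).
Proof.
move=> mCt; have -> : Cij beta Ct i j = Ct `\`
    \bigcup_(n in [set n | (1 <= n)%N]) (fimg beta i j n `|` fimg beta j i n).
  apply/seteqP; split=> z [Cz nH]; split=> //.
    by move=> [n n1 Hn]; apply: nH; exists n.
  by move=> [n [n1 Hn]]; apply: nH; exists n.
apply: measurableD => //; apply: bigcup_measurable => n _.
by apply: measurableU; exact: measurable_fimg.
Qed.

Lemma measurable_Cset : measurable (Cset beta).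
Proof.
have mCt a b c : measurable [set z : R * R | a <= z.1 /\ b <= z.2 /\ z.1 + z.2 <= c].
  apply: measurableI; [|apply: measurableI].
  - exact: measurable_ler_set (measurable_cst _) measurable_fst.
  - exact: measurable_ler_set (measurable_cst _) measurable_snd.
  - exact: measurable_ler_set measurable_coord_sum (measurable_cst _).
by apply: measurableU; [apply: measurableU|]; apply: measurable_Cij; apply: mCt.
Qed.

End BorelPlane.

Lemma measurable_digit (d : measure_display) (T : measurableType d) (g : 'I_3 -> T) n :
  measurable_fun setT (fun b : Upsilon => g (b n)).
Proof.
move=> _ A _; rewrite setTI.
have -> : (fun b : Upsilon => g (b n)) @^-1` A =
    \bigcup_(k in [set k | A (g k)]) occurs_at n [:: k].
  apply/seteqP; split=> b /=.
    by move=> Ab; exists (b n) => //; rewrite /occurs_at /mkseq /= addn0.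
  by move=> [k Ak]; rewrite /occurs_at /mkseq /= addn0 => -[->].
apply: fin_bigcup_measurable; first exact: finite_finset.
by move=> k _; exact: measurable_occurs_at.
Qed.

Section MeasurableDset.
Variables (R : realType) (beta : R).
Hypothesis beta_gt1 : 1 < beta.

Lemma measurable_expansion_digits (g : 'I_3 -> R) j : (forall k, 0 <= g k <= 1) ->
  measurable_fun setT (fun b : Upsilon => expansion beta (fun i => g (b (j + i)%N))).
Proof.
move=> g01; apply: (measurable_fun_cvg
  (h := fun m (b : Upsilon) => series (fun i => g (b (j + i)%N) / beta ^+ i.+1) m)).
  elim=> [|m IH].
    by rewrite /series /=; under eq_fun do rewrite big_geq //; exact: measurable_cst.
  under eq_fun do rewrite seriesSr.
  by apply: measurable_funD => //; exact: (measurable_digit (fun k => g k / beta ^+ m.+1)).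
by move=> b _; apply: is_cvg_expansion.
Qed.

Lemma measurable_zpt j : measurable_fun setT (fun b : Upsilon => zpt beta b j).
Proof.
have -> : (fun b : Upsilon => zpt beta b j) = fun b =>
    (expansion beta (fun i => (qv R (b (j + i)%N)).1),
     expansion beta (fun i => (qv R (b (j + i)%N)).2)).
  by apply/funext => b; exact: zptE.
apply: measurable_fun_pair.
  by apply: (measurable_expansion_digits (g := fun k => (qv R k).1)) => k; case: (qv_bounds R k).
by apply: (measurable_expansion_digits (g := fun k => (qv R k).2)) => k; case: (qv_bounds R k).
Qed.

Lemma measurable_Dset : measurable (Dset beta : set Upsilon).
Proof.
have -> : Dset beta = \bigcap_(N in [set: nat]) \bigcup_(j in [set j | (N <= j)%N])
    (fun b : Upsilon => zpt beta b j) @^-1` Cset beta.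
  apply/seteqP; split=> b /=.
    by move=> h N _; have [j [Nj Cj]] := h N; exists j.
  by move=> h N; have [j Nj Cj] := h N I; exists j.
apply: bigcap_measurable; first by exists 0%N.
move=> N _; apply: bigcup_measurable => j _.
exact: measurableT_preimage (measurable_zpt j) (measurable_Cset beta_gt1).
Qed.

End MeasurableDset.

Definition w01110 : seq 'I_3 := [:: 0; 1; 1; 1; 0]%R.

Lemma zpt_occurs01110 (R : realType) (beta : R) (b : seq3) j : 1 < beta ->
  occurs_at j w01110 b ->
  zpt beta b j = Defs.fmap beta 0 (Defs.fmap beta 1 (Defs.fmap beta 1
                   (Defs.fmap beta 1 (Defs.fmap beta 0 (zpt beta b (j + 5)))))).
Proof.
move=> beta_gt1; rewrite /occurs_at /mkseq /= !addnS !addn0 => -[e0 e1 e2 e3 e4].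
by rewrite zpt_fmap // e0 zpt_fmap // e1 zpt_fmap // e2 zpt_fmap // e3 zpt_fmap // e4.
Qed.

Lemma golden_of_le_betastar (R : realFieldType) (betastar beta : R) :
  betastar ^+ 3 - 2 * betastar ^+ 2 + 2 * betastar = 2 ->
  3 / 2 < beta -> beta <= betastar -> beta ^+ 2 <= beta + 1.
Proof.
move=> hstar hb bb.
have star_golden : betastar ^+ 2 <= betastar + 1.
  rewrite leNgt; apply/negP => t0.
  have : 0 < (betastar - 1) * (betastar ^+ 2 - betastar - 1) by apply: mulr_gt0; lra.
  have : betastar ^+ 3 - 2 * betastar ^+ 2 + 2 * betastar - 2 =
    (betastar - 1) * (betastar ^+ 2 - betastar - 1) + (2 * betastar - 3) by ring.
  lra.
have : 0 <= (betastar - beta) * (betastar + beta - 1) by apply: mulr_ge0; lra.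
lra.
Qed.

Lemma plastic_of_gt3half (R : realFieldType) (beta : R) :
  3 / 2 < beta -> beta + 1 <= beta ^+ 3.
Proof.
move=> hb; have : 0 < (beta - 3 / 2) * ((beta + 3 / 2) * beta).
  by apply: mulr_gt0; [|apply: mulr_gt0]; lra.
lra.
Qed.

Lemma notDset_sub_avoid_from (R : realType) (beta : R) :
  1 < beta -> beta ^+ 2 <= beta + 1 -> beta + 1 <= beta ^+ 3 ->
  ~` Dset beta `<=` \bigcup_N avoid_from N w01110.
Proof.
move=> beta_gt1 golden plastic b /= /existsNP [N notD].
exists N => // j /= Nj bj; apply: notD; exists j; split=> //.
rewrite (zpt_occurs01110 beta_gt1 bj); left; left.
exact: C01_fmap01110 (zpt_triangle beta_gt1 b (j + 5)).
Qed.

Lemma negligible_setC_probability1 (d : measure_display) (T : measurableType d) (R : realType)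
    (P : probability T R) (A : set T) :
  measurable A -> P.-negligible (~` A) -> P A = 1%E.
Proof.
move=> mA /(negligibleP _ (measurableC mA)) PnA.
rewrite -[LHS]adde0 -PnA -measureU ?setUv //.
- exact: probability_setT.
- exact: measurableC.
- exact: setICr.
Qed.

Theorem lemma6p8 (R : realType) (betastar beta : R)
  (hstar : betastar ^+ 3 - 2 * betastar ^+ 2 + 2 * betastar = 2)
  (hlo : 3 / 2 < beta) (hhi : beta <= betastar)
  (P : probability Upsilon R)
  (hP : forall w : seq 'I_3, P (cyl w) = ((3%:R ^- size w : R))%:E) :
  measurable (Dset beta) /\ P (Dset beta) = 1%:E.
Proof.
have beta_gt1 : 1 < beta by lra.
have mD := measurable_Dset beta_gt1.
split=> //; apply: negligible_setC_probability1 => //.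
have golden := golden_of_le_betastar hstar hlo hhi.
apply: negligibleS (notDset_sub_avoid_from beta_gt1 golden (plastic_of_gt3half hlo)) _.
apply: negligible_bigcup => N.
by apply/negligibleP; [exact: measurable_avoid_from|exact: (measure_avoid_from hP)].
Qed.
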